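(* Let $W\subseteq\mathbb{R}^n$ be a linear subspace of dimension $d<n$. If $A\subseteq\mathbb{R}$ is countable, then the set $\mathcal{A} := \bigl\{(y_1,\dotsc,y_n)\in\mathbb{R}^n:\sum_{i=1}^n\mathbb{1}_{\{y_i - w_i\in A\}}\ge d+1\text{ for some }(w_1,\dotsc,w_n)\in W\bigr\}$ has Lebesgue measure $0$. *)

From HB Require Import structures.
From mathcomp Require Import all_boot all_order all_algebra.
From mathcomp Require Import all_classical all_reals.
Set Implicit Arguments. Unset Strict Implicit. Unset Printing Implicit Defensive.
Import Order.TTheory GRing.Theory Num.Theory.
Local Open Scope classical_set_scope.
Local Open Scope ring_scope.

Definition box (R : realType) (n : nat) (a b : 'rV[R]_n) : set 'rV[R]_n :=
  [set x | forall i : 'I_n, a 0 i <= x 0 i <= b 0 i].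

Definition box_vol (R : realType) (n : nat) (a b : 'rV[R]_n) : R :=
  \prod_(i < n) (b 0 i - a 0 i).

(* S has n-dimensional Lebesgue measure 0: for every eps > 0, S is covered by
   countably many boxes of total volume at most eps (Lebesgue outer measure 0). *)
Definition lebesgue_null (R : realType) (n : nat) (S : set 'rV[R]_n) : Prop :=
  forall eps : R, 0 < eps ->
    exists a b : nat -> 'rV[R]_n,
      [/\ (forall k (i : 'I_n), a k 0 i <= b k 0 i),
          S `<=` \bigcup_k box (a k) (b k)
        & forall N : nat, \sum_(k < N) box_vol (a k) (b k) <= eps].

Definition bad_set (R : realType) (n d : nat) (W : {vspace 'rV[R]_n})
  (A : set R) : set 'rV[R]_n :=
  [set y : 'rV[R]_n | exists2 w : 'rV[R]_n, w \in W &
     (d.+1 <= #|[set i : 'I_n | (y ord0 i - w ord0 i)%R \in A]|)%N].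

From HB Require Import structures.
From mathcomp Require Import all_boot all_order all_algebra.
From mathcomp Require Import all_classical all_reals.
From mathcomp Require Import ring lra.
Import Order.TTheory GRing.Theory Num.Theory.
Local Open Scope classical_set_scope.
Local Open Scope ring_scope.

(* If y is in the set, witnessed by w in W and the set I of the i with
   y_i - w_i in A, then #|I| > dim W, so some nonzero c supported on I
   annihilates W; hence c.y = c.(y - w) = sum_(i in I) c_i a_i with all a_i
   in A.  The set therefore lies in countably many hyperplanes {c.y = t},
   indexed by I and by the a_i.  Inside a unit cube, a hyperplane with
   c_j <> 0 is the graph of a Lipschitz function of the coordinates other
   than j, so over a grid of mesh 1/N it is covered by boxes of total volume
   O(1/N). *)

Lemma countable_sub_range {T : Type} (x0 : T) (A : set T) :
  countable A -> exists f : nat -> T, A `<=` range f.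
Proof.
move=> /ocard_geP[g]; exists (fun k => odflt x0 (g k)) => x Ax.
have [k _ gk] := @surj _ _ _ _ g (Some x) (ex_intro2 _ _ x Ax erefl).
by exists k; rewrite //= gk.
Qed.

Lemma ler_sum_uniq_sub (R : numDomainType) (T : eqType) (s s' : seq T)
    (F : T -> R) :
  uniq s -> uniq s' -> {subset s <= s'} -> (forall x, x \in s' -> 0 <= F x) ->
  \sum_(x <- s) F x <= \sum_(x <- s') F x.
Proof.
move=> s_uniq s'_uniq ss' F_ge0.
rewrite [leRHS](bigID (mem s)) /= -[X in X + _]big_filter.
have s_perm : perm_eq s [seq x <- s' | x \in s].
  apply: uniq_perm; rewrite ?filter_uniq // => x.
  by rewrite mem_filter andb_idr //; apply: ss'.
rewrite -(perm_big _ s_perm).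
by rewrite lerDl big_seq_cond sumr_ge0 // => x /andP[/F_ge0].
Qed.

Lemma sum_exprS_half (R : numFieldType) (M : nat) :
  \sum_(m < M) (2^-1 : R) ^+ m.+1 = 1 - 2^-1 ^+ M.
Proof.
elim: M => [|M IH]; first by rewrite big_ord0 expr0 subrr.
by rewrite big_ord_recr /= IH !exprS; field.
Qed.

Lemma grid_cell (R : archiRealFieldType) (N : nat) (u : R) :
  (0 < N)%N -> 0 <= u <= 1 ->
  exists k : 'I_N, k%:R / N%:R <= u <= k%:R / N%:R + N%:R^-1.
Proof.
move=> N0 /andP[u0 u1]; have N_gt0 : 0 < N%:R :> R by rewrite ltr0n.
have /andP[kuN uNk] := truncn_itv (mulr_ge0 u0 (ltW N_gt0)).
set k := Num.trunc _ in kuN uNk.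
have cellS m : m%:R / N%:R + N%:R^-1 = m.+1%:R / N%:R :> R.
  by rewrite -natr1 mulrDl mul1r.
have [kN|Nk] := ltnP k N.
  exists (Ordinal kN); rewrite /= cellS.
  by rewrite ler_pdivrMr // ler_pdivlMr // kuN ltW.
have N1N : (N.-1 < N)%N by rewrite prednK.
exists (Ordinal N1N); rewrite /= cellS prednK // divff ?gt_eqF // u1.
rewrite ler_pdivrMr // (le_trans _ kuN) // ler_nat.
exact: leq_trans (leq_pred N) Nk.
Qed.

Lemma exists_orthogonal_supported {F : fieldType} {n : nat}
    (W : {vspace 'rV[F]_n}) (I : {set 'I_n}) :
  (\dim W < #|I|)%N ->
  exists c : 'rV[F]_n, [/\ c != 0, forall i, i \notin I -> c 0 i = 0
    & forall w, w \in W -> \sum_i c 0 i * w 0 i = 0].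
Proof.
move=> dimW_lt.
pose E : 'M[F]_(#|I|, n) := \matrix_(k, i) (enum_val k == i)%:R.
pose B : 'M[F]_(\dim W, n) := \matrix_(l < \dim W) (vbasis W)`_l.
have /rowV0Pn[v /sub_kermxP vEB v0] : kermx (E *m B^T) != 0.
  rewrite kermx_eq0 /row_free; apply: contraTN dimW_lt => /eqP <-.
  by rewrite -leqNgt rank_leq_col.
pose c := v *m E.
have cE k : c 0 (enum_val k) = v 0 k.
  rewrite /c mxE (bigD1 k) //= mxE eqxx mulr1 big1 ?addr0 // => k' k'k.
  by rewrite mxE (inj_eq enum_val_inj) (negbTE k'k) mulr0.
have cB (l : 'I_(\dim W)) : \sum_i c 0 i * (vbasis W)`_l 0 i = 0.
  move/rowP/(_ l): vEB; rewrite mulmxA [RHS]mxE => vEBl.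
  rewrite -[RHS]vEBl [RHS]mxE; apply: eq_bigr => i _.
  by congr (_ * _); rewrite !mxE.
exists c; split.
- by apply: contraNneq v0 => vE0; apply/eqP/rowP => k; rewrite -cE vE0 !mxE.
- move=> i iI; rewrite /c mxE big1 // => k _; rewrite mxE.
  have /negbTE -> : enum_val k != i.
    by apply: contraNneq iI => <-; apply: enum_valP.
  by rewrite mulr0.
move=> w /coord_vbasis ->.
under eq_bigr do rewrite summxE mulr_sumr.
rewrite exchange_big big1 // => l _.
under eq_bigr do rewrite [X in _ * X]mxE mulrCA.
by rewrite -mulr_sumr cB mulr0.
Qed.

(* Asking for [c I != 0] also when #|I| <= dim W makes every hyperplane of the
   cover built in [bad_set_sub_hyperplanes] null. *)
Lemma exists_orthogonal_family {F : fieldType} {n : nat}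
    (W : {vspace 'rV[F]_n}) :
  (\dim W < n)%N ->
  exists c : {set 'I_n} -> 'rV[F]_n,
    [/\ forall I, c I != 0,
        forall I w, w \in W -> \sum_i c I 0 i * w 0 i = 0
      & forall I : {set 'I_n},
          (\dim W < #|I|)%N -> forall i, i \notin I -> c I 0 i = 0].
Proof.
move=> dimW_lt.
have /choice[c cP] : forall I : {set 'I_n}, exists c : 'rV[F]_n,
    [/\ c != 0, forall w, w \in W -> \sum_i c 0 i * w 0 i = 0
      & (\dim W < #|I|)%N -> forall i, i \notin I -> c 0 i = 0].
  move=> I; have [dimW_I|_] := ltnP (\dim W) #|I|.
    by have [c [c0 cI cW]] := exists_orthogonal_supported W I dimW_I; exists c.
  have [|c [c0 _ cW]] := exists_orthogonal_supported W [set: 'I_n]%SET.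
    by rewrite cardsT card_ord.
  by exists c.
by exists c; split=> I; have [] := cP I.
Qed.

Section NullSets.
Context {R : realType} {n : nat}.
Implicit Types (S : set 'rV[R]_n) (a b : 'rV[R]_n).

Lemma box_vol_ge0 a b : (forall i, a 0 i <= b 0 i) -> 0 <= box_vol a b.
Proof. by move=> ab; apply: prodr_ge0 => i _; rewrite subr_ge0. Qed.

Lemma box_vol_flat a : (0 < n)%N -> box_vol a a = 0.
Proof. by move=> n0; rewrite /box_vol (bigD1 (Ordinal n0)) //= subrr mul0r. Qed.

Lemma lebesgue_null_sub {S S' : set 'rV[R]_n} :
  S `<=` S' -> lebesgue_null S' -> lebesgue_null S.
Proof.
move=> SS' S'null eps /S'null[a [b [ab S'ab vol]]].
by exists a, b; split=> //; apply: subset_trans S'ab.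
Qed.

(* In dimension 0 every box has volume 1 (an empty product), so not even
   [set0] is null: hence the hypotheses [0 < n] below. *)
Lemma lebesgue_null_fin_cover S : (0 < n)%N ->
  (forall eps : R, 0 < eps -> exists s : seq ('rV[R]_n * 'rV[R]_n),
     [/\ forall x, x \in s -> forall i, x.1 0 i <= x.2 0 i,
         forall y, S y -> exists2 x, x \in s & box x.1 x.2 y
       & \sum_(x <- s) box_vol x.1 x.2 <= eps]) ->
  lebesgue_null S.
Proof.
move=> n0 Scover eps /Scover[s [s_le s_cov s_vol]].
pose x0 : 'rV[R]_n * 'rV[R]_n := (0, 0).
have nth_le k i : (nth x0 s k).1 0 i <= (nth x0 s k).2 0 i.
  have [ks|sk] := ltnP k (size s); first exact/s_le/mem_nth.
  by rewrite nth_default.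
exists (fun k => (nth x0 s k).1), (fun k => (nth x0 s k).2); split=> //.
  move=> y /s_cov[x xs yx]; exists (index x s) => //.
  by rewrite nth_index.
move=> N; apply: le_trans s_vol.
pose v k := box_vol (nth x0 s k).1 (nth x0 s k).2.
rewrite (big_nth x0) big_mkord -/(v _).
have [Ns|sN] := leqP N (size s).
  rewrite -(subnKC Ns) big_split_ord lerDl sumr_ge0 // => k _.
  exact/box_vol_ge0/nth_le.
rewrite -(subnKC (ltnW sN)) big_split_ord /= [X in _ + X]big1 ?addr0 // => k _.
by rewrite /v nth_default ?box_vol_flat //= leq_addr.
Qed.

Lemma lebesgue_null0 : (0 < n)%N -> lebesgue_null (set0 : set 'rV[R]_n).
Proof.
move=> n0; apply: lebesgue_null_fin_cover => // eps eps0.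
by exists [::]; split=> //; rewrite big_nil ltW.
Qed.

Lemma lebesgue_null_bigcup_nat (T : nat -> set 'rV[R]_n) :
  (forall m, lebesgue_null (T m)) -> lebesgue_null (\bigcup_m T m).
Proof.
move=> Tnull eps eps0.
have eps_m_gt0 m : 0 < eps * 2^-1 ^+ m.+1.
  by rewrite mulr_gt0 // exprn_gt0 // invr_gt0.
have /choice[a /choice[b abP]] := fun m => Tnull m _ (eps_m_gt0 m).
have /card_esym/ppcard_eqP[e] := card_nat2.
have e_inj : injective e.
  by move=> k l; apply: (@inj _ _ [set: nat] e); rewrite in_setE.
pose vol (x : nat * nat) := box_vol (a x.1 x.2) (b x.1 x.2).
have vol_ge0 x : 0 <= vol x by apply: box_vol_ge0; have [] := abP x.1.
exists (fun k => a (e k).1 (e k).2), (fun k => b (e k).1 (e k).2); split.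
- by move=> k; have [] := abP (e k).1.
- move=> y [m _ Tmy]; have [_ /(_ y Tmy)[j _ yj] _] := abP m.
  have [k _ ek] := @surj _ _ _ _ e (m, j) I.
  by exists k => //; rewrite ek.
move=> N; pose M := (\max_(k < N) ((e k).1 + (e k).2)).+1.
have e_lt k : (k < N)%N -> ((e k).1 < M)%N && ((e k).2 < M)%N.
  move=> kN; rewrite !ltnS; apply/andP; split.
    exact: leq_trans (leq_addr _ _) (leq_bigmax (Ordinal kN)).
  exact: leq_trans (leq_addl _ _) (leq_bigmax (Ordinal kN)).
pose grid := [seq (m, j) | m <- index_iota 0 M, j <- index_iota 0 M].
apply: (@le_trans _ _ (\sum_(x <- grid) vol x)).
  rewrite -(big_mkord xpredT (fun k => vol (e k))) -(big_map e xpredT vol).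
  apply: ler_sum_uniq_sub => //.
  - by rewrite map_inj_in_uniq ?iota_uniq // => k l _ _; apply: e_inj.
  - by rewrite allpairs_uniq ?iota_uniq // => -[? ?] [? ?] _ _ [-> ->].
  - move=> x /mapP[k]; rewrite mem_index_iota => /andP[_ kN] ->.
    have /andP[e1 e2] := e_lt k kN.
    by rewrite [e k]surjective_pairing allpairs_f // mem_index_iota.
rewrite big_allpairs big_mkord; under eq_bigr do rewrite big_mkord.
apply: (@le_trans _ _ (\sum_(m < M) eps * 2^-1 ^+ m.+1)).
  by apply: ler_sum => m _; have [_ _] := abP m.
rewrite -mulr_sumr sum_exprS_half.
by rewrite ler_piMr ?(ltW eps0) // gerBl exprn_ge0 // invr_ge0.
Qed.

Lemma lebesgue_null_bigcup (I : countType) (T : I -> set 'rV[R]_n) :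
  (0 < n)%N -> (forall i, lebesgue_null (T i)) -> lebesgue_null (\bigcup_i T i).
Proof.
move=> n0 Tnull.
pose T' m := if pickle_inv m is Some i then T i else set0.
apply: (@lebesgue_null_sub _ (\bigcup_m T' m)).
  by move=> y [i _ Tiy]; exists (pickle i) => //; rewrite /T' pickleK_inv.
by apply: lebesgue_null_bigcup_nat => m; rewrite /T'; case: pickle_inv => [i|];
  [apply: Tnull | apply: lebesgue_null0].
Qed.

End NullSets.

Section Hyperplane.
Context {R : realType} {n : nat}.
Implicit Types (c y z : 'rV[R]_n) (t : R).

Definition hyperplane c t : set 'rV[R]_n := [set y | \sum_i c 0 i * y 0 i = t].

Lemma hyperplane_coord_dist c y (x : 'I_n -> R) (j : 'I_n) (e : R) :
  c 0 j != 0 -> (forall i, `|y 0 i - x i| <= e) ->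
  `|y 0 j - (\sum_i c 0 i * y 0 i - \sum_(i | i != j) c 0 i * x i) / c 0 j|
    <= (\sum_i `|c 0 i|) * e / `|c 0 j|.
Proof.
move=> cj yx.
have -> : y 0 j - (\sum_i c 0 i * y 0 i - \sum_(i | i != j) c 0 i * x i) / c 0 j
          = (\sum_(i | i != j) c 0 i * (x i - y 0 i)) / c 0 j.
  under [in RHS]eq_bigr do rewrite mulrBr.
  by rewrite sumrB (bigD1 j) //=; field.
rewrite normrM normfV ler_pM2r ?invr_gt0 ?normr_gt0 //.
apply: le_trans (ler_norm_sum _ _ _) _.
apply: (@le_trans _ _ (\sum_(i | i != j) `|c 0 i| * e)).
  by apply: ler_sum => i _; rewrite normrM distrC ler_wpM2l.
rewrite -mulr_suml ler_wpM2r ?(le_trans _ (yx j)) //.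
by rewrite [leRHS](bigD1 j) //= lerDr.
Qed.

Section UnitCube.
Variables (c : 'rV[R]_n) (j : 'I_n) (t : R) (z : 'rV[R]_n).
Hypothesis cj : c 0 j != 0.

Let L : R := (\sum_i `|c 0 i|) / `|c 0 j|.
Let r (N : nat) : R := L / N%:R.

Let L_gt0 : 0 < L.
Proof.
rewrite divr_gt0 ?normr_gt0 // (bigD1 j) //=.
by rewrite ltr_pwDl ?normr_gt0 ?sumr_ge0.
Qed.

Let cell {N : nat} (p : {ffun 'I_n -> 'I_N}) (i : 'I_n) : R := (p i)%:R / N%:R.
Let centre {N : nat} (p : {ffun 'I_n -> 'I_N}) : R :=
  (t - \sum_(i | i != j) c 0 i * (z 0 i + cell p i)) / c 0 j.
Let base {N : nat} (p : {ffun 'I_n -> 'I_N}) (i : 'I_n) : R :=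
  if i == j then centre p - r N else z 0 i.
(* The box of the cell p is centred, along coordinate j, at [centre p], which
   only depends on the other coordinates of p; the coordinate p j subdivides
   that window of width [2 * r N], so that all N ^ n boxes have the same
   shape. *)
Let side (N : nat) (i : 'I_n) : R := if i == j then 2 * r N else 1.
Let lo N (p : {ffun 'I_n -> 'I_N}) : 'rV[R]_n :=
  \row_i (base p i + side N i * cell p i).
Let hi N (p : {ffun 'I_n -> 'I_N}) : 'rV[R]_n :=
  \row_i (base p i + side N i * (cell p i + N%:R^-1)).

Let r_gt0 {N} : (0 < N)%N -> 0 < r N.
Proof. by move=> N0; rewrite divr_gt0 ?ltr0n. Qed.

Let side_gt0 N i : (0 < N)%N -> 0 < side N i.
Proof.
by move=> N0; rewrite /side; case: ifP => // _; rewrite mulr_gt0 ?r_gt0.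
Qed.

Let lo_le_hi N p i : (0 < N)%N -> lo N p 0 i <= hi N p 0 i.
Proof.
move=> N0; rewrite !mxE lerD2l ler_wpM2l ?lerDl ?invr_ge0 //.
exact/ltW/side_gt0.
Qed.

Let cover_cell N y : (0 < N)%N -> hyperplane c t y ->
  box z (z + const_mx 1) y ->
  exists p : {ffun 'I_n -> 'I_N}, box (lo N p) (hi N p) y.
Proof.
move=> N0 yH ycube.
have r2 : 0 < 2 * r N by rewrite mulr_gt0 ?r_gt0.
have u01 i : 0 <= y 0 i - z 0 i <= 1.
  by have := ycube i; rewrite !mxE subr_ge0 lerBlDl => /andP[-> ->].
have /choice[g gP] := fun i => @grid_cell R N _ N0 (u01 i).
pose p0 := [ffun i => g i].
have near_centre : `|y 0 j - centre p0| <= r N.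
  rewrite /centre -yH.
  apply: le_trans
    (hyperplane_coord_dist c y (fun i => z 0 i + cell p0 i) j N%:R^-1 cj _) _.
    move=> i; have := gP i; rewrite /cell ffunE ler_norml.
    by move=> /andP[? ?]; apply/andP; split; lra.
  by rewrite /r /L mulrAC.
have [|kj kjP] := @grid_cell R N ((y 0 j - (centre p0 - r N)) / (2 * r N)) N0.
  have := r_gt0 N0; move: near_centre; rewrite ler_norml => /andP[? ?].
  move=> r0; rewrite ler_pdivrMr //; apply/andP; split; last lra.
  by apply: divr_ge0; lra.
pose p := [ffun i => if i == j then kj else g i].
have centre_p : centre p = centre p0.
  rewrite /centre; congr (_ / _); congr (_ - _); apply: eq_bigr => i ij.
  by rewrite /cell !ffunE (negbTE ij).
exists p => i; rewrite !mxE /base /side /cell ffunE.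
case: eqVneq => [->|ij]; last first.
  by rewrite !mul1r; have := gP i; move=> /andP[? ?]; apply/andP; split; lra.
rewrite centre_p.
set U := (y 0 j - _) / _ in kjP.
have -> : y 0 j = centre p0 - r N + 2 * r N * U.
  by rewrite [2 * r N * U]mulrC divfK ?gt_eqF //; ring.
by rewrite !lerD2l !ler_pM2l.
Qed.

Let cells_vol N : (0 < N)%N ->
  \sum_(p : {ffun 'I_n -> 'I_N}) box_vol (lo N p) (hi N p) = 2 * r N.
Proof.
move=> N0.
have vol_p p : box_vol (lo N p) (hi N p) = 2 * r N * N%:R^-1 ^+ n.
  rewrite /box_vol (eq_bigr (fun i => side N i * N%:R^-1)); last first.
    by move=> i _; rewrite !mxE; ring.
  rewrite prodrMr cardT size_enum_ord (bigD1 j) //= /side eqxx.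
  by rewrite big1 ?mulr1 // => i /negbTE ->.
rewrite (eq_bigr _ (fun p _ => vol_p p)) sumr_const card_ffun !card_ord.
rewrite -[_ *+ _]mulr_natr natrX -mulrA -exprMn mulVf ?expr1n ?mulr1 //.
by rewrite pnatr_eq0 -lt0n.
Qed.

Lemma lebesgue_null_hyperplane_cube :
  lebesgue_null (hyperplane c t `&` box z (z + const_mx 1)).
Proof.
apply: lebesgue_null_fin_cover.
  exact: leq_ltn_trans (leq0n _) (ltn_ord j).
move=> eps eps0; pose N := (Num.trunc (2 * L / eps)).+1.
exists [seq (lo N p, hi N p) | p <- enum {ffun 'I_n -> 'I_N}]; split.
- by move=> _ /mapP[p _ ->] i; apply: lo_le_hi.
- move=> y [yH ycube]; have [p yp] := @cover_cell N y (ltn0Sn _) yH ycube.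
  by exists (lo N p, hi N p) => //; apply/mapP; exists p; rewrite ?mem_enum.
rewrite big_map big_enum /= cells_vol // /r mulrA ler_pdivrMr ?ltr0n //.
have := truncnS_gt (2 * L / eps).
by rewrite -/N ltr_pdivrMr // [eps * _]mulrC => /ltW.
Qed.

End UnitCube.

Lemma lebesgue_null_hyperplane c t : c != 0 -> lebesgue_null (hyperplane c t).
Proof.
move=> c0; have [j cj] : exists j, c 0 j != 0.
  apply/existsP; apply: contraNT c0 => /existsPn c0.
  by apply/eqP/rowP => i; rewrite mxE; apply/eqP/negbNE/c0.
have n0 : (0 < n)%N := leq_ltn_trans (leq0n j) (ltn_ord j).
pose corner (q : {ffun 'I_n -> int}) : 'rV[R]_n := \row_i (q i)%:~R.
apply: (@lebesgue_null_sub _ _ _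
  (\bigcup_q (hyperplane c t `&` box (corner q) (corner q + const_mx 1)))).
  move=> y yH; exists [ffun i => Num.floor (y 0 i)] => //; split=> // i.
  rewrite !mxE ffunE floor_le /= -intrD1 ltW //.
  exact: floorD1_gt.
apply: lebesgue_null_bigcup n0 _ => q.
exact: lebesgue_null_hyperplane_cube cj.
Qed.

End Hyperplane.

Lemma bad_set_sub_hyperplanes {R : realType} {n d : nat}
    {W : {vspace 'rV[R]_n}} {A : set R} {f : nat -> R}
    {c : {set 'I_n} -> 'rV[R]_n} :
  A `<=` range f ->
  (forall I w, w \in W -> \sum_i c I 0 i * w 0 i = 0) ->
  (forall I : {set 'I_n},
     (d < #|I|)%N -> forall i, i \notin I -> c I 0 i = 0) ->
  bad_set d W A `<=` \bigcup_(x : {set 'I_n} * {ffun 'I_n -> nat})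
                       hyperplane (c x.1) (\sum_i c x.1 0 i * f (x.2 i)).
Proof.
move=> Af cW cI y [w wW dI].
pose I := [set i | (y 0 i - w 0 i) \in A]%SET.
have {}cI : forall i, i \notin I -> c I 0 i = 0.
  apply: cI; apply: leq_trans dI (eq_leq (eq_card _)) => i.
  by rewrite inE; apply/idP/idP => [/set_mem|/mem_set].
have /choice[g gP] : forall i, exists k, i \in I -> f k = y 0 i - w 0 i.
  move=> i; case: (boolP (i \in I)) => [|_]; last by exists 0%N.
  by rewrite inE => /set_mem/Af[k _ fk]; exists k.
exists (I, [ffun i => g i]) => //; rewrite /hyperplane /=.
have -> : \sum_i c I 0 i * y 0 i =
          \sum_i c I 0 i * (y 0 i - w 0 i) + \sum_i c I 0 i * w 0 i.
  by rewrite -big_split /=; apply: eq_bigr => i _; rewrite -mulrDr subrK.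
rewrite cW // addr0; apply: eq_bigr => i _; rewrite ffunE.
by case: (boolP (i \in I)) => iI; [rewrite gP | rewrite !cI ?mul0r].
Qed.

Theorem lemma6p30 (R : realType) (n d : nat) (W : {vspace 'rV[R]_n})
  (A : set R) :
  \dim W = d -> (d < n)%N -> countable A ->
  lebesgue_null (bad_set d W A).
Proof.
move=> <- dimW_lt /(countable_sub_range 0)[f Af].
have [c [c0 cW cI]] := exists_orthogonal_family W dimW_lt.
apply: lebesgue_null_sub (bad_set_sub_hyperplanes Af cW cI) _.
apply: lebesgue_null_bigcup (leq_ltn_trans (leq0n _) dimW_lt) _ => x.
exact: lebesgue_null_hyperplane.
Qed.
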